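(* In the setting below, $\mathbb E\,S(\widetilde a)\le(8+16C_G)\,\mathbb E\,S(a)$.
   Context: Let $n,N\in\mathbb N$, $I=\{1,\dots,n\}$, $J=\{1,\dots,N\}$, $G$ a nonempty finite set of maps $I\to J$, $\mathbb P$ the normalized counting measure on $G$ ($\mathbb P(E)=|E|/|G|$) and $\mathbb E$ its expectation. Assume there is a constant $C_G\ge1$ such that for all $i\in I,j\in J$, $\mathbb P(g(i)=j)=1/N$, and for all pairs $(i_1,j_1)\ne(i_2,j_2)$ in $I\times J$, $\mathbb P(g(i_1)=j_1,g(i_2)=j_2)\le C_G/N^2$. Fix an integer $1\le\ell\le n$ and a matrix $a\in\mathbb R^{n\times N}$ with non-negative entries, and let $h:\{1,\dots,nN\}\to I\times J$ be a bijection with $a(h(j))\ge a(h(j+1))$ for $1\le j<\ell N$ and $a(h(j))=0$ for $\ell N<j\le nN$ (for a matrix $b$, $b(i,j)=b_{ij}$). For such $a$, let $\widetilde a$ be the matrix with $\widetilde a(h(j))=\big(\frac1{\ell N}\sum_{i=1}^{\ell N}a(h(i))\big)\mathbb 1_{\{1,\dots,\ell N\}}(j)$ for $1\le j\le nN$. For a non-negative matrix $b$ and $g\in G$ let $S(b)(g)=\sum_{k=1}^{\ell}S_k(b)(g)$, where $S_k(b)(g)$ is the $k$-th largest (with multiplicity) of the numbers $b_{1g(1)},\dots,b_{ng(n)}$. *)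

From HB Require Import structures.
From mathcomp Require Import all_boot all_order all_algebra.
Set Implicit Arguments. Unset Strict Implicit. Unset Printing Implicit Defensive.
Import Order.TTheory GRing.Theory Num.Theory.
Local Open Scope ring_scope.

(* Index sets I = {1..n}, J = {1..N} are represented (0-based) by 'I_n, 'I_N;
   maps I -> J are finite functions {ffun 'I_n -> 'I_N}. *)

Definition topsum (R : realFieldType) (l : nat) (s : seq R) : R :=
  \sum_(x <- take l (sort (fun x y : R => y <= x) s)) x.

Definition Sfun (R : realFieldType) (n N l : nat) (b : 'M[R]_(n, N))
    (g : {ffun 'I_n -> 'I_N}) : R :=
  topsum l [seq b i (g i) | i <- enum 'I_n].

Definition Exp (R : realFieldType) (n N : nat) (G : {set {ffun 'I_n -> 'I_N}})
    (f : {ffun 'I_n -> 'I_N} -> R) : R :=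
  (\sum_(g in G) f g) / #|G|%:R.

Definition Prob (R : realFieldType) (n N : nat) (G : {set {ffun 'I_n -> 'I_N}})
    (E : pred {ffun 'I_n -> 'I_N}) : R :=
  #|[set g in G | E g]|%:R / #|G|%:R.

From HB Require Import structures.
From mathcomp Require Import all_boot all_order all_algebra.
From mathcomp Require Import ring lra.
Import Order.TTheory GRing.Theory Num.Theory.
Set Implicit Arguments. Unset Strict Implicit. Unset Printing Implicit Defensive.
Local Open Scope ring_scope.

(* Write X_b(g) = sum_i b_{i g(i)} and |b| = sum_{i,j} b_{ij}.  As S(b)(g) sums the l
   largest of the nonnegative numbers b_{i g(i)}, E S(ã) <= E X_ã = |ã| / N = |a| / N.
   Conversely let T = h({1, ..., l N}) and Z(g) = #{i | (i, g(i)) in T}: at most Z of the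
   numbers a_{i g(i)} are positive, so l X_a <= max(l, Z) S(a), and bounding 1 / max(l, Z)
   from below by a tangent line gives X_a (2 c l - l - Z) <= c^2 l S(a).  The pair
   condition yields E[X_a Z] <= (1 + l C_G) E X_a, and c = 1 + C_G gives
   |a| / N = E X_a <= 2 (1 + C_G) E S(a). *)

Section Topsum.
Context {R : realFieldType}.
Implicit Types (s y : seq R) (x w : R).

Local Notation geR := (fun u v : R => v <= u).

Let ge_trans : transitive geR := rev_trans le_trans.
Let ge_total : total geR := fun u v => le_total v u.

Lemma sum_sort_ge s : \sum_(x <- sort geR s) x = \sum_(x <- s) x.
Proof. by apply: perm_big; rewrite perm_sort. Qed.

Lemma sorted_ge_take_drop y k x w :
  sorted geR y -> x \in take k y -> w \in drop k y -> w <= x.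
Proof.
rewrite (sorted_pairwise ge_trans) -{1}(cat_take_drop k y) pairwise_cat.
by case/and3P=> /allrelP take_ge_drop _ _ /take_ge_drop; apply.
Qed.

Lemma sum_take_count_gt0 m y : sorted geR y -> all (>= 0) y ->
  (count (> 0%R) y <= m)%N -> \sum_(x <- take m y) x = \sum_(x <- y) x.
Proof.
move=> y_sorted y_ge0 y_count.
rewrite -{2}(cat_take_drop m y) big_cat /= -[LHS]addr0; congr (_ + _).
rewrite big_seq big1 // => w w_drop; apply/eqP; rewrite eq_le.
rewrite (allP y_ge0 _ (mem_drop w_drop)) andbT leNgt; apply/negP => w_gt0.
have m_lt : (m < size y)%N.
  by rewrite ltnNge; apply: contraL w_drop => /drop_oversize ->.
have take_gt0 : count (> 0) (take m y) = m.
  rewrite -[RHS](size_takel (ltnW m_lt)); apply/eqP; rewrite -all_count.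
  apply/allP => x x_take; apply: (lt_le_trans w_gt0).
  exact: sorted_ge_take_drop x_take w_drop.
have drop_gt0 : (0 < count (> 0%R) (drop m y))%N.
  by rewrite -has_count; apply/hasP; exists w.
move: y_count; rewrite -(cat_take_drop m y) count_cat take_gt0.
by rewrite -[X in (_ <= X)%N](addn0 m) leq_add2l leqNgt drop_gt0.
Qed.

Lemma sum_take_sorted_mean l m y : sorted geR y -> all (>= 0) y -> (l <= m)%N ->
  l%:R * \sum_(x <- take m y) x <= m%:R * \sum_(x <- take l y) x.
Proof.
move=> y_sorted y_ge0 lm.
rewrite -(subnKC lm) takeD big_cat natrD mulrDl mulrDr lerD2l.
set A := take l y; set W := take (m - l) (drop l y).
have A_ge0 : 0 <= \sum_(x <- A) x.
  by rewrite big_seq sumr_ge0 // => x /mem_take/(allP y_ge0).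
have [y_short | l_le] := ltnP (size y) l.
  by rewrite /W drop_oversize ?(ltnW y_short) // big_nil mulr0 mulr_ge0.
have W_le w : w \in W -> l%:R * w <= \sum_(x <- A) x.
  move=> /mem_take w_drop.
  have -> : l%:R * w = \sum_(x <- A) w.
    by rewrite big_const_seq count_predT iter_addr_0 size_takel // mulr_natl.
  rewrite big_seq [leRHS]big_seq; apply: ler_sum => x x_A.
  exact: sorted_ge_take_drop y_sorted x_A w_drop.
rewrite mulr_sumr big_seq (le_trans (ler_sum _ W_le)) // -big_seq.
rewrite big_const_seq count_predT iter_addr_0 -[_ *+ size W]mulr_natl.
apply: ler_wpM2r => //.
by rewrite ler_nat size_take_min geq_minl.
Qed.

Lemma topsum_ge0 l s : all (>= 0) s -> 0 <= topsum l s.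
Proof.
move=> s_ge0; rewrite /topsum big_seq sumr_ge0 // => x /mem_take.
by rewrite mem_sort => /(allP s_ge0).
Qed.

Lemma topsum_le_sum l s : all (>= 0) s -> topsum l s <= \sum_(x <- s) x.
Proof.
move=> s_ge0; rewrite /topsum -[leRHS]sum_sort_ge; set y := sort _ s.
rewrite -{2}(cat_take_drop l y) big_cat lerDl.
by rewrite big_seq sumr_ge0 // => x /mem_drop; rewrite mem_sort => /(allP s_ge0).
Qed.

Lemma topsum_ge_mean l z s : all (>= 0) s -> (count (> 0%R) s <= z)%N ->
  l%:R * \sum_(x <- s) x <= (maxn l z)%:R * topsum l s.
Proof.
move=> s_ge0 s_count; rewrite /topsum -sum_sort_ge.
have sorted_s : sorted geR (sort geR s) := sort_sorted ge_total s.
have sort_ge0 : all (>= 0) (sort geR s) by rewrite all_sort.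
rewrite -(sum_take_count_gt0 (m := maxn l z) sorted_s sort_ge0); last first.
  by rewrite count_sort (leq_trans s_count (leq_maxr _ _)).
exact: sum_take_sorted_mean sorted_s sort_ge0 (leq_maxl _ _).
Qed.

End Topsum.

(* [1 / m >= (2 c l - m) / (c l)^2]: the convex function [m |-> 1 / m] lies above its
   tangent line at [c l]. *)
Lemma tangent_line_bound {R : realFieldType} (x s m l c : R) :
  0 <= x -> 0 < m -> 0 <= l -> l * x <= m * s -> x * (2 * c * l - m) <= c ^+ 2 * l * s.
Proof.
move=> x_ge0 m_gt0 l_ge0 lx_le; rewrite -subr_ge0 -(pmulr_rge0 _ m_gt0).
have -> : m * (c ^+ 2 * l * s - x * (2 * c * l - m))
    = c ^+ 2 * l * (m * s - l * x) + x * (c * l - m) ^+ 2 by ring.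
by apply: addr_ge0; apply: mulr_ge0; rewrite ?sqr_ge0 ?subr_ge0 // mulr_ge0 ?sqr_ge0.
Qed.

Lemma sum_delta {R : pzSemiRingType} {I : finType} (F : I -> R) (x : I) :
  \sum_i F i * (x == i)%:R = F x.
Proof.
rewrite (bigD1 x) //= eqxx mulr1 big1 ?addr0 // => i.
by rewrite eq_sym => /negbTE ->; rewrite mulr0.
Qed.

Section Sampling.
Variables (R : realFieldType) (n N : nat) (G : {set {ffun 'I_n -> 'I_N}}).
Implicit Types (a b : 'M[R]_(n, N)) (T : {set 'I_n * 'I_N}).
Implicit Types (g : {ffun 'I_n -> 'I_N}) (f : {ffun 'I_n -> 'I_N} -> R).

Lemma eq_Exp {f f'} : (forall g, f g = f' g) -> Exp G f = Exp G f'.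
Proof. by move=> ff'; rewrite /Exp (eq_bigr _ (fun g _ => ff' g)). Qed.

Lemma Exp_sum (I : finType) (F : I -> {ffun 'I_n -> 'I_N} -> R) :
  Exp G (fun g => \sum_i F i g) = \sum_i Exp G (F i).
Proof. by rewrite /Exp exchange_big mulr_suml. Qed.

Lemma ExpZ k f : Exp G (fun g => k * f g) = k * Exp G f.
Proof. by rewrite /Exp -mulr_sumr mulrA. Qed.

Lemma ExpB f f' : Exp G (fun g => f g - f' g) = Exp G f - Exp G f'.
Proof. by rewrite /Exp sumrB mulrBl. Qed.

Lemma ler_Exp f f' : (forall g, g \in G -> f g <= f' g) -> Exp G f <= Exp G f'.
Proof. by move=> ff'; rewrite /Exp ler_wpM2r ?invr_ge0 // ler_sum. Qed.

Lemma Exp_ge0 f : (forall g, g \in G -> 0 <= f g) -> 0 <= Exp G f.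
Proof. by move=> f_ge0; rewrite /Exp divr_ge0 ?sumr_ge0. Qed.

Lemma Exp_indicator (P : pred {ffun 'I_n -> 'I_N}) :
  Exp G (fun g => (P g)%:R) = Prob R G P.
Proof.
rewrite /Exp /Prob; congr (_ / _).
rewrite -sum1_card natr_sum big_mkcond [RHS]big_mkcond /=.
by apply: eq_bigr => g _; rewrite inE; case: (g \in G); case: (P g).
Qed.

Definition sum_along b g : R := \sum_i b i (g i).

Definition mass b : R := \sum_i \sum_j b i j.

Definition indicator_mx (T : {set 'I_n * 'I_N}) : 'M[R]_(n, N) :=
  \matrix_(i, j) ((i, j) \in T)%:R.

Lemma sum_alongE b g :
  sum_along b g = \sum_(p : 'I_n * 'I_N) b p.1 p.2 * (g p.1 == p.2)%:R.
Proof.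
rewrite -(pair_big xpredT xpredT (fun i j => b i j * (g i == j)%:R)) /=.
by apply: eq_bigr => i _; rewrite sum_delta.
Qed.

Lemma massE b : mass b = \sum_(p : 'I_n * 'I_N) b p.1 p.2.
Proof. exact: pair_big. Qed.

Lemma sum_along_map b g :
  \sum_(x <- [seq b i (g i) | i <- enum 'I_n]) x = sum_along b g.
Proof. by rewrite big_map big_enum. Qed.

Lemma sum_along_indicator T g :
  sum_along (indicator_mx T) g = (count (fun i => (i, g i) \in T) (enum 'I_n))%:R.
Proof.
rewrite -sum1_count natr_sum big_mkcond big_enum /=.
by apply: eq_bigr => i _; rewrite mxE; case: ((i, g i) \in T).
Qed.

Lemma mass_indicator T : mass (indicator_mx T) = #|T|%:R.
Proof.
rewrite massE -sum1_card natr_sum [RHS]big_mkcond /=.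
by apply: eq_bigr => p _; rewrite mxE -surjective_pairing; case: (p \in T).
Qed.

Lemma sum_along_le_Sfun l (c : R) T a g : (0 < l)%N ->
  (forall i j, 0 <= a i j) -> (forall i j, (i, j) \notin T -> a i j = 0) ->
  sum_along a g * (2 * c * l%:R - l%:R - sum_along (indicator_mx T) g)
    <= c ^+ 2 * l%:R * Sfun l a g.
Proof.
move=> l_gt0 a_ge0 a_supp; rewrite sum_along_indicator.
set z := count _ _; set s := [seq a i (g i) | i <- enum 'I_n].
have s_ge0 : all (>= 0) s by apply/allP => _ /mapP [i _ ->].
have s_count : (count (> 0%R) s <= z)%N.
  rewrite count_map; apply: sub_count => i /=.
  by apply: contraLR => /a_supp ->; rewrite ltxx.
have := topsum_ge_mean l s_ge0 s_count; rewrite sum_along_map => mean_le.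
have X_ge0 : 0 <= sum_along a g by rewrite sumr_ge0.
have maxn_gt0 : 0 < (maxn l z)%:R :> R by rewrite ltr0n leq_max l_gt0.
apply: le_trans (tangent_line_bound c X_ge0 maxn_gt0 (ler0n _ _) mean_le).
rewrite ler_wpM2l // -addrA -opprD lerD2l lerN2 -natrD ler_nat.
by rewrite geq_max leq_addr leq_addl.
Qed.

Hypothesis Prob_marginal : forall i j, Prob R G (fun g => g i == j) = 1 / N%:R.

Lemma Exp_sum_along b : Exp G (sum_along b) = mass b / N%:R.
Proof.
rewrite (eq_Exp (sum_alongE b)) Exp_sum massE mulr_suml.
by apply: eq_bigr => p _; rewrite ExpZ Exp_indicator Prob_marginal mul1r.
Qed.

Lemma Exp_Sfun_le_mass l a :
  (forall i j, 0 <= a i j) -> Exp G (Sfun l a) <= mass a / N%:R.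
Proof.
move=> a_ge0; rewrite -Exp_sum_along; apply: ler_Exp => g _.
by rewrite /Sfun -sum_along_map topsum_le_sum //; apply/allP => _ /mapP [i _ ->].
Qed.

Lemma Exp_Sfun_ge0 l a : (forall i j, 0 <= a i j) -> 0 <= Exp G (Sfun l a).
Proof.
by move=> a_ge0; apply: Exp_ge0 => g _; apply/topsum_ge0/allP => _ /mapP [i _ ->].
Qed.

Variable CG : R.
Hypothesis CG_ge0 : 0 <= CG.
Hypothesis Prob_pair : forall (i1 i2 : 'I_n) (j1 j2 : 'I_N), (i1, j1) != (i2, j2) ->
  Prob R G (fun g => (g i1 == j1) && (g i2 == j2)) <= CG / N%:R ^+ 2.

Lemma Prob_pair_le (p q : 'I_n * 'I_N) :
  Prob R G (fun g => (g p.1 == p.2) && (g q.1 == q.2))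
    <= CG / N%:R ^+ 2 + (p == q)%:R / N%:R.
Proof.
have [<- | neq] := eqVneq p q.
  have -> : Prob R G (fun g => (g p.1 == p.2) && (g p.1 == p.2))
      = Prob R G (fun g => g p.1 == p.2).
    by rewrite /Prob; congr (_%:R / _); apply: eq_card => g; rewrite !inE andbb.
  by rewrite Prob_marginal lerDr divr_ge0 ?sqr_ge0.
rewrite mul0r addr0; move: neq.
by case: p => i1 j1; case: q => i2 j2; apply: Prob_pair.
Qed.

Lemma Exp_sum_along_mul a b :
  (forall i j, 0 <= a i j) -> (forall i j, 0 <= b i j) ->
  Exp G (fun g => sum_along a g * sum_along b g)
    <= CG / N%:R ^+ 2 * mass a * mass b + (\sum_i \sum_j a i j * b i j) / N%:R.
Proof.
move=> a_ge0 b_ge0.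
have expand g : sum_along a g * sum_along b g = \sum_p \sum_q
    a p.1 p.2 * b q.1 q.2 * ((g p.1 == p.2) && (g q.1 == q.2))%:R.
  rewrite !sum_alongE big_distrlr /=; apply: eq_bigr => p _; apply: eq_bigr => q _.
  by rewrite -mulnb natrM mulrACA.
rewrite (eq_Exp expand) Exp_sum.
under eq_bigr => p _ do rewrite Exp_sum.
under eq_bigr => p _ do under eq_bigr => q _ do rewrite ExpZ Exp_indicator.
set K := CG / N%:R ^+ 2.
rewrite [leRHS](_ : _ = \sum_p \sum_q a p.1 p.2 * b q.1 q.2 * (K + (p == q)%:R / N%:R)).
  apply: ler_sum => p _; apply: ler_sum => q _.
  by rewrite ler_wpM2l ?mulr_ge0 ?Prob_pair_le.
rewrite (pair_big xpredT xpredT (fun i j => a i j * b i j)) !massE -mulrA big_distrlr.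
rewrite mulr_sumr mulr_suml -big_split; apply: eq_bigr => p _ /=.
rewrite -(sum_delta (fun q => a p.1 p.2 * b q.1 q.2 / N%:R) p) mulr_sumr -big_split.
by apply: eq_bigr => q _ /=; ring.
Qed.

Lemma Exp_sum_along_mul_indicator l T a : (#|T| <= l * N)%N ->
  (forall i j, 0 <= a i j) -> (forall i j, (i, j) \notin T -> a i j = 0) ->
  Exp G (fun g => sum_along a g * sum_along (indicator_mx T) g)
    <= (1 + l%:R * CG) * (mass a / N%:R).
Proof.
move=> T_small a_ge0 a_supp; set u := indicator_mx T.
have u_ge0 i j : 0 <= u i j by rewrite mxE.
have mass_au : \sum_i \sum_j a i j * u i j = mass a.
  apply: eq_bigr => i _; apply: eq_bigr => j _; rewrite mxE.
  by case: (boolP ((i, j) \in T)) => [_ | /a_supp ->]; rewrite ?mulr1 ?mul0r.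
apply: le_trans (Exp_sum_along_mul a_ge0 u_ge0) _; rewrite mass_au.
have [N0 | N_gt0] := posnP N.
  by rewrite N0 expr0n invr0 !(mulr0, mul0r) addr0.
have mass_ge0 : 0 <= mass a by apply: sumr_ge0 => i _; apply: sumr_ge0.
apply: le_trans (_ : CG / N%:R ^+ 2 * mass a * (l * N)%:R + mass a / N%:R <= _).
  rewrite lerD2r ler_wpM2l ?mass_indicator ?ler_nat //.
  by rewrite !mulr_ge0 ?invr_ge0 ?sqr_ge0.
have -> : CG / N%:R ^+ 2 * mass a * (l * N)%:R = l%:R * CG * (mass a / N%:R).
  by rewrite natrM; field; rewrite pnatr_eq0 -lt0n.
by rewrite mulrDl mul1r addrC.
Qed.

Lemma mass_le_Exp_Sfun l T a : 1 <= CG -> (0 < l)%N -> (#|T| <= l * N)%N ->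
  (forall i j, 0 <= a i j) -> (forall i j, (i, j) \notin T -> a i j = 0) ->
  mass a / N%:R <= 2 * (1 + CG) * Exp G (Sfun l a).
Proof.
move=> CG_ge1 l_gt0 T_small a_ge0 a_supp.
set c := 1 + CG; set q := mass a / N%:R; set e := Exp G (Sfun l a).
set Z := sum_along (indicator_mx T); set k := 2 * c * l%:R - l%:R.
have XZ_le := Exp_sum_along_mul_indicator T_small a_ge0 a_supp.
rewrite -/Z -/q in XZ_le.
have expand g : sum_along a g * (k - Z g) = k * sum_along a g - sum_along a g * Z g.
  by ring.
have : Exp G (fun g => sum_along a g * (k - Z g))
    <= Exp G (fun g => c ^+ 2 * l%:R * Sfun l a g).
  by apply: ler_Exp => g _; apply: sum_along_le_Sfun.
rewrite (eq_Exp expand) ExpB !ExpZ Exp_sum_along -/q -/e => mean_le.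
(* [c = 1 + CG] is chosen so that [(2 c - 1) l - (1 + l CG) = c l - 1]. *)
have key : (c * l%:R - 1) * q <= c ^+ 2 * l%:R * e.
  by rewrite /k /c in mean_le XZ_le *; lra.
have q_ge0 : 0 <= q by rewrite divr_ge0 // sumr_ge0 // => i _; rewrite sumr_ge0.
have cl_ge2 : 2 <= c * l%:R.
  by rewrite (le_trans (_ : 2 <= c)) ?ler_peMr ?ler1n // /c; move: CG_ge1; lra.
rewrite -(ler_pM2l (lt_le_trans (ltr0Sn _ 1) cl_ge2)).
apply: le_trans (_ : c * l%:R * q <= 2 * ((c * l%:R - 1) * q)) _; first by nra.
have -> : c * l%:R * (2 * c * e) = 2 * (c ^+ 2 * l%:R * e) by ring.
by rewrite ler_pM2l.
Qed.

End Sampling.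

Lemma card_ltn_ord m p : (p <= m)%N -> #|[set k : 'I_m | (k < p)%N]| = p.
Proof.
move=> pm; rewrite -sum1_card (eq_bigl (fun k : 'I_m => (k < p)%N)) => [|k].
  by rewrite -(big_ord_widen m (fun _ => 1%N) pm) sum1_card card_ord.
by rewrite inE.
Qed.

Section Flattening.
Variables (R : realFieldType) (n N p : nat) (h : 'I_(n * N) -> 'I_n * 'I_N).
Hypothesis h_bij : bijective h.
Implicit Types b : 'M[R]_(n, N).

Lemma mass_reindex b : mass b = \sum_k b (h k).1 (h k).2.
Proof. by rewrite massE (reindex h) //; apply: onW_bij. Qed.

Definition flat_support : {set 'I_n * 'I_N} :=
  h @: [set k : 'I_(n * N) | (k < p)%N].

Lemma card_flat_support : (p <= n * N)%N -> (#|flat_support| <= p)%N.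
Proof. by move=> p_le; rewrite -[leqRHS](card_ltn_ord p_le) leq_imset_card. Qed.

Variables (a atil : 'M[R]_(n, N)).
Hypothesis a_flat : forall k : 'I_(n * N), (p <= k)%N -> a (h k).1 (h k).2 = 0.
Hypothesis atilE : forall k : 'I_(n * N), atil (h k).1 (h k).2 =
  if (k < p)%N then (\sum_(k0 : 'I_(n * N) | (k0 < p)%N) a (h k0).1 (h k0).2) / p%:R
  else 0.

Lemma flat_support_notin i j : (i, j) \notin flat_support -> a i j = 0.
Proof.
case: h_bij => hinv hK hinvK notin.
have := a_flat (k := hinv (i, j)); rewrite hinvK; apply.
by rewrite leqNgt; apply: contra notin => lt_p; rewrite -[(i, j)]hinvK imset_f // inE.
Qed.

Lemma average_ge0 : (forall i j, 0 <= a i j) -> forall i j, 0 <= atil i j.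
Proof.
case: h_bij => hinv hK hinvK a_ge0 i j.
have := atilE (hinv (i, j)); rewrite hinvK => ->.
by case: ifP => // _; rewrite divr_ge0 // sumr_ge0.
Qed.

Lemma mass_average : (p <= n * N)%N -> mass atil = mass a.
Proof.
move=> p_le; rewrite !mass_reindex.
have -> : \sum_k a (h k).1 (h k).2
    = \sum_(k : 'I_(n * N) | (k < p)%N) a (h k).1 (h k).2.
  rewrite [LHS](bigID (fun k : 'I_(n * N) => (k < p)%N)) /= [X in _ + X]big1 ?addr0 //.
  by move=> k; rewrite -leqNgt; apply: a_flat.
under eq_bigr do rewrite atilE.
rewrite -big_mkcond /= -(big_ord_widen _ (fun=> _ / _) p_le) sumr_const card_ord.
have [-> | p_gt0] := posnP p; first by rewrite big_pred0.
by rewrite -[_ *+ p]mulr_natr divfK // pnatr_eq0 -lt0n.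
Qed.

End Flattening.

Theorem lemma3p5 (R : realFieldType) (n N : nat)
    (G : {set {ffun 'I_n -> 'I_N}}) (CG : R)
    (l : nat) (a atil : 'M[R]_(n, N)) (h : 'I_(n * N) -> 'I_n * 'I_N) :
  G != set0 ->
  1 <= CG ->
  (forall (i : 'I_n) (j : 'I_N),
      Prob R G (fun g => g i == j) = 1 / N%:R) ->
  (forall (i1 i2 : 'I_n) (j1 j2 : 'I_N), (i1, j1) != (i2, j2) ->
      Prob R G (fun g => (g i1 == j1) && (g i2 == j2)) <= CG / (N%:R ^+ 2)) ->
  (1 <= l)%N -> (l <= n)%N ->
  (forall (i : 'I_n) (j : 'I_N), 0 <= a i j) ->
  bijective h ->
  (forall k k' : 'I_(n * N), val k' = (val k).+1 -> (val k' < l * N)%N ->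
      a (h k').1 (h k').2 <= a (h k).1 (h k).2) ->
  (forall k : 'I_(n * N), (l * N <= val k)%N -> a (h k).1 (h k).2 = 0) ->
  (forall k : 'I_(n * N),
      atil (h k).1 (h k).2 =
        if (val k < l * N)%N then
          (\sum_(k0 : 'I_(n * N) | (val k0 < l * N)%N) a (h k0).1 (h k0).2)
            / (l * N)%:R
        else 0) ->
  Exp G (Sfun l atil) <= (8 + 16 * CG) * Exp G (Sfun l a).
Proof.
move=> _ CG_ge1 Prob_marginal Prob_pair l_gt0 l_le a_ge0 h_bij _ a_flat atilE.
have lN_le : (l * N <= n * N)%N by rewrite leq_mul2r l_le orbT.
apply: le_trans (Exp_Sfun_le_mass Prob_marginal l (average_ge0 h_bij atilE a_ge0)) _.
rewrite (mass_average h_bij a_flat atilE lN_le).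
have CG_ge0 : 0 <= CG := le_trans ler01 CG_ge1.
apply: le_trans (mass_le_Exp_Sfun Prob_marginal CG_ge0 Prob_pair CG_ge1 l_gt0
  (card_flat_support h lN_le) a_ge0 (flat_support_notin h_bij a_flat)) _.
by apply: ler_wpM2r; [exact: Exp_Sfun_ge0 | lra].
Qed.
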